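(* Let $C$ be a maximal independent set of the Kneser graph $\Gamma$ of flags of type $\{2,3\}$ of $\mathrm{PG}(6,q)$. (i) For every saturated solid $S$ and every flag $(E',S')\in C$ we have $E'\cap S\neq\emptyset$. (ii) If $S$ is a solid with $S\cap E'\neq\emptyset$ for all flags $(E',S')\in C$, then $S$ is saturated. (iii) If $S$ and $S'$ are saturated solids, then $\dim(S\cap S')\ge 1$. (iv) If $H$ is a hyperplane with $E\subseteq H$ for all flags $(E,S)\in C$, then every solid of $H$ is saturated.
   Context: Dimensions are projective (planes 2, solids 3, hyperplanes 5). A flag of type $\{2,3\}$ is a pair $(E,S)$ of a plane $E$ and a solid $S$ with $E\subseteq S$; in $\Gamma$ distinct flags $(E,S),(E',S')$ are adjacent iff $E\cap S'=\emptyset$ and $E'\cap S=\emptyset$. A solid $S$ is saturated (for $C$) if $(E,S)\in C$ for all planes $E$ of $S$. *)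

(* PG(6,q) is modelled as the lattice of subspaces of the
   7-dimensional row space 'rV[F]_7 over a finite field F (|F| = q).
   Projective dimension d  <->  vector-space dimension d+1. *)
From HB Require Import structures.
From mathcomp Require Import all_boot all_order all_algebra all_field.
Set Implicit Arguments. Unset Strict Implicit. Unset Printing Implicit Defensive.
Import GRing.Theory.
Local Open Scope ring_scope.

Definition PGvec (F : finFieldType) := 'rV[F]_7.

Section PG.
Variable F : finFieldType.
Local Notation sub := {vspace PGvec F}.

Definition is_plane (E : sub) : Prop := \dim E = 3%N.
Definition is_solid (S : sub) : Prop := \dim S = 4%N.
Definition is_hyperplane (H : sub) : Prop := \dim H = 6%N.

Definition is_flag (f : sub * sub) : Prop :=
  is_plane f.1 /\ is_solid f.2 /\ (f.1 <= f.2)%VS.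

(* projective subspaces are disjoint iff their vector intersection is 0 *)
Definition pdisjoint (U W : sub) : Prop := (U :&: W)%VS = 0%VS.

Definition adjacent (f g : sub * sub) : Prop :=
  f <> g /\ pdisjoint f.1 g.2 /\ pdisjoint g.1 f.2.

Definition independent (C : sub * sub -> Prop) : Prop :=
  (forall f, C f -> is_flag f) /\
  (forall f g, C f -> C g -> ~ adjacent f g).

Definition maximal_independent (C : sub * sub -> Prop) : Prop :=
  independent C /\
  (forall f, is_flag f -> independent (fun g => C g \/ g = f) -> C f).

Definition saturated (C : sub * sub -> Prop) (S : sub) : Prop :=
  forall E : sub, is_plane E -> (E <= S)%VS -> C (E, S).

End PG.

From HB Require Import structures.
From mathcomp Require Import all_boot all_order all_algebra all_field.
From mathcomp Require Import zify.

(* Everything follows from one observation: if a solid S meets a subspace W in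
   at most a point, then S contains a plane disjoint from W.  Two flags
   (E, S), (E', S') of C are never adjacent, so whenever E' misses S, or S
   meets S' in at most a point, such planes yield an adjacent pair of flags
   over saturated solids.  Conversely, a solid meeting every plane of C gives
   flags (E, S) adjacent to no flag of C, which lie in C by maximality. *)

Set Implicit Arguments. Unset Strict Implicit. Unset Printing Implicit Defensive.
Import GRing.Theory.

Section SubspaceDimension.
Variables (K : fieldType) (vT : vectType K).
Implicit Types U V W : {vspace vT}.

Lemma exists_subv_dim U k : (k <= \dim U)%N ->
  exists2 X : {vspace vT}, (X <= U)%VS & \dim X = k.
Proof.
have /andP[/eqP spanU freeB] := vbasisP U.
move: (vbasis U : seq vT) spanU freeB => B <- freeB.
rewrite (eqP freeB) => le_k_B; exists <<take k B>>%VS.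
  by rewrite -{2}(cat_take_drop k B) span_cat addvSl.
rewrite -(cat_take_drop k B) in freeB.
by rewrite (eqP (catl_free freeB)) size_takel.
Qed.

Lemma exists_subv_dim_disjoint U W k : (k + \dim (U :&: W) <= \dim U)%N ->
  exists X : {vspace vT}, [/\ (X <= U)%VS, \dim X = k & (X :&: W)%VS = 0%VS].
Proof.
rewrite -(dimv_cap_compl U W) addnC leq_add2l => /exists_subv_dim[X sXUW dimX].
exists X; split=> //; first exact: subv_trans sXUW (diffvSl U W).
by apply/eqP; rewrite -subv0 -(capv_diff U W) capvS.
Qed.

Lemma dimv_sum_cap_le U V W : (U <= W)%VS -> (V <= W)%VS ->
  (\dim U + \dim V <= \dim W + \dim (U :&: V))%N.
Proof.
move=> sUW sVW; rewrite -dimv_sum_cap leq_add2r dimvS //.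
by rewrite subv_add sUW.
Qed.
End SubspaceDimension.

Section KneserFlags.
Variable F : finFieldType.
Local Notation sub := {vspace PGvec F}.
Implicit Types U W E S : sub.

Lemma pdisjointC U W : pdisjoint U W <-> pdisjoint W U.
Proof. by rewrite /pdisjoint capvC. Qed.

Lemma pdisjointS U U' W W' : (U <= U')%VS -> (W <= W')%VS ->
  pdisjoint U' W' -> pdisjoint U W.
Proof. by move=> sUU' sWW' UW'; apply/eqP; rewrite -subv0 -UW' capvS. Qed.

Lemma pdisjoint_dim U W : pdisjoint U W <-> \dim (U :&: W) = 0%N.
Proof. by rewrite /pdisjoint; split=> [->|/eqP]; rewrite ?dimv0 // dimv_eq0 => /eqP. Qed.

Lemma solid_plane_disjoint S W : is_solid S -> (\dim (S :&: W) <= 1)%N ->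
  exists E, [/\ is_plane E, (E <= S)%VS & pdisjoint E W].
Proof.
move=> dimS le_SW_1.
have [|E [sES dimE EW]] := @exists_subv_dim_disjoint _ _ S W 3; last by exists E.
by rewrite dimS; lia.
Qed.

Lemma flags_adjacent E S E' S' : is_plane E -> (E <= S)%VS ->
  pdisjoint E S' -> pdisjoint E' S -> adjacent (E, S) (E', S').
Proof.
move=> dimE sES ES' E'S; split=> //; case=> eE _.
move: E'S; rewrite -eE /pdisjoint (capv_idPl sES) => E0.
by move: dimE; rewrite /is_plane E0 dimv0.
Qed.

Section MaximalIndependent.
Variable C : sub * sub -> Prop.
Hypothesis maxC : maximal_independent C.

Lemma C_flag f : C f -> is_flag f.
Proof. by case: maxC => -[flagC _] _; apply: flagC. Qed.

Lemma C_nonadjacent f g : C f -> C g -> ~ adjacent f g.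
Proof. by case: maxC => -[_ nadjC] _; apply: nadjC. Qed.

Lemma saturated_of_meets_planes S : is_solid S ->
  (forall f, C f -> ~ pdisjoint S f.1) -> saturated C S.
Proof.
move=> dimS meetS E dimE sES; have flagES : is_flag (E, S) by [].
apply: maxC.2 => //; split=> [g [/C_flag|->] //|f g].
case=> [Cf|->] [Cg|->]; first exact: C_nonadjacent.
- by case=> _ [/pdisjointC fS _]; apply: meetS Cf fS.
- by case=> _ [_ /pdisjointC gS]; apply: meetS Cg gS.
- by case.
Qed.

Lemma saturated_meets_planes S f : is_solid S -> saturated C S -> C f ->
  ~ pdisjoint f.1 S.
Proof.
case: f => E' S' dimS satS Cf E'S.
have [/= dimE' [dimS' sE'S']] := C_flag Cf.
have /pdisjoint_dim cap0 : pdisjoint (S :&: S') E'.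
  by apply: pdisjointS (capvSl S S') (subvv E') _; apply/pdisjointC.
have := dimv_sum_cap_le (capvSr S S') sE'S'.
rewrite cap0 dimE' dimS' => le_SS'.
have [|E [dimE sES ES']] := @solid_plane_disjoint S S' dimS; first lia.
exact: C_nonadjacent (satS E dimE sES) Cf (flags_adjacent dimE sES ES' E'S).
Qed.

Lemma saturated_solids_meet S S' : is_solid S -> is_solid S' ->
  saturated C S -> saturated C S' -> (2 <= \dim (S :&: S'))%N.
Proof.
move=> dimS dimS' satS satS'; rewrite leqNgt; apply/negP => lt_SS'_2.
have [E [dimE sES ES']] := @solid_plane_disjoint S S' dimS lt_SS'_2.
have [|E' [dimE' sE'S' E'S]] := @solid_plane_disjoint S' S dimS'; first by rewrite capvC.
exact: C_nonadjacent (satS E dimE sES) (satS' E' dimE' sE'S')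
  (flags_adjacent dimE sES ES' E'S).
Qed.

Lemma hyperplane_solids_saturated H S : is_hyperplane H ->
  (forall f, C f -> (f.1 <= H)%VS) -> is_solid S -> (S <= H)%VS ->
  saturated C S.
Proof.
move=> dimH sCH dimS sSH; apply: saturated_of_meets_planes => // f Cf.
have [dimE _] := C_flag Cf; move/pdisjoint_dim => SE0.
have := dimv_sum_cap_le sSH (sCH f Cf).
by rewrite dimS dimE dimH SE0.
Qed.

End MaximalIndependent.
End KneserFlags.

Theorem lemma6p3 (F : finFieldType) (C : {vspace PGvec F} * {vspace PGvec F} -> Prop) :
  maximal_independent C ->
  (* (i) *)
  (forall S : {vspace PGvec F}, is_solid S -> saturated C S ->
     forall f, C f -> ~ pdisjoint f.1 S) /\
  (* (ii) *)
  (forall S : {vspace PGvec F}, is_solid S ->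
     (forall f, C f -> ~ pdisjoint S f.1) -> saturated C S) /\
  (* (iii) projective dim of S :&: S' at least 1, i.e. vector dim >= 2 *)
  (forall S S' : {vspace PGvec F}, is_solid S -> is_solid S' ->
     saturated C S -> saturated C S' -> (2 <= \dim (S :&: S'))%N) /\
  (* (iv) *)
  (forall H : {vspace PGvec F}, is_hyperplane H ->
     (forall f, C f -> (f.1 <= H)%VS) ->
     forall S : {vspace PGvec F}, is_solid S -> (S <= H)%VS -> saturated C S).
Proof.
move=> maxC; split; first by move=> S dimS satS f; apply: saturated_meets_planes.
split; first exact: saturated_of_meets_planes.
split; first exact: saturated_solids_meet.
by move=> H dimH sCH S; apply: (hyperplane_solids_saturated maxC dimH sCH).
Qed.
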